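(* For every FOLDS vocabulary $K$, the pre-signature $\Sigma_K$ is a signature.
   Context: Type system. Let $V$ be an infinite set of variables with decidable equality and the unrestricted fresh variable provider ($\varphi(X)=V\setminus X$ for finite $X\subseteq V$, with $\mathsf{fr}(X)\in\varphi(X)$ some choice). Preelements are terms built from variables and function symbols; a pretype is $S(t_1,\ldots,t_n)$ with $S$ a type symbol and $t_i$ preelements; $\mathrm{V}(E)$ denotes the variables of $E$ and $E[\bar a/\bar x]$ simultaneous substitution. A precontext is $\Gamma=x_1:A_1,\ldots,x_n:A_n$ with distinct variables and $\mathrm{V}(A_k)\subseteq\{x_1,\ldots,x_{k-1}\}$; $\mathrm{OV}(\Gamma)=x_1,\ldots,x_n$. A type declaration on standard form is a pair $(\Gamma,S)$ with $\Gamma$ a precontext and $S$ a type symbol. For a set $\Sigma$ of such declarations (each symbol declared once), $\mathcal{J}(\Sigma)$ is the smallest set of judgements closed under: (R1) $\langle\rangle$ context; (R2) from $\Gamma$ context and $A$ type $(\Gamma)$ infer $\Gamma,x:A$ context for $x\notin\mathrm{V}(\Gamma)$; (R3) from $x_1:A_1,\ldots,x_n:A_n$ context infer $x_i:A_i\ (x_1:A_1,\ldots,x_n:A_n)$; (R4) if $(\Gamma,S)\in\Sigma$ with $\Gamma=x_1:A_1,\ldots,x_n:A_n$ and $\bar a:\Delta\to\Gamma$, infer $S(a_1,\ldots,a_n)$ type $(\Delta)$; where $\bar a:\Delta\to\Gamma$ abbreviates the judgements $\Delta$ context, $\Gamma$ context, $a_k:A_k[a_1,\ldots,a_{k-1}/x_1,\ldots,x_{k-1}]\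 (\Delta)$ ($k=1,\ldots,n$). $\Sigma$ is a signature if ($\Gamma$ context)$\in\mathcal{J}(\Sigma)$ for every $(\Gamma,S)\in\Sigma$. FOLDS vocabulary: a finite skeletal category $K$ with no non-identity endomorphisms. Write $A\le B$ iff there is a morphism $B\to A$; this is a well-founded partial order on objects; fix a linear order $\le^*$ extending it. For each object $A$ fix a non-repeating enumeration $x^A_1,\ldots,x^A_{n(A)}$ of all non-identity morphisms with domain $A$ such that $\mathrm{cod}(x^A_i)\le^*\mathrm{cod}(x^A_j)$ whenever $i<j$. The objects of $K$ serve as type symbols and the morphisms of $K$ as variables ($K\subseteq V$). For a sequence $\bar u=u_1,\ldots,u_m$ of morphisms with domain $\mathrm{cod}(v)$ write $\bar u^v=u_1v,\ldots,u_mv$ (composites). By induction on $\le$ define for each object $A$ the precontext $\Gamma_A=x_1:A_1,\ldots,x_n:A_n$ where $n=n(A)$, $x_i=x^A_i$, $C_i=\mathrm{cod}(x_i)$, and $A_i=C_i(\mathrm{OV}(\Gamma_{C_i})^{x_i})$. Then $\Sigma_K=\{(\Gamma_A,A): A \text{ an object of } K\}$. *)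

From mathcomp Require Import all_boot.
Set Implicit Arguments. Unset Strict Implicit. Unset Printing Implicit Defensive.

Section Calculus.
Variables (V : eqType) (Fn Ty : Type).

Inductive preelem : Type :=
| PVar of V
| PApp of Fn & seq preelem.

Record pretype : Type := PreType { pt_sym : Ty; pt_args : seq preelem }.

Fixpoint varsE (t : preelem) : seq V :=
  match t with
  | PVar x => [:: x]
  | PApp _ ts => flatten (map varsE ts)
  end.

Definition varsT (A : pretype) : seq V := flatten (map varsE (pt_args A)).

Fixpoint substE (xs : seq V) (as_ : seq preelem) (t : preelem) : preelem :=
  match t with
  | PVar x => if x \in xs then nth (PVar x) as_ (index x xs) else PVar x
  | PApp f ts => PApp f (map (substE xs as_) ts)
  end.

Definition substT (xs : seq V) (as_ : seq preelem) (A : pretype) : pretype :=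
  PreType (pt_sym A) (map (substE xs as_) (pt_args A)).

Definition ctx := seq (V * pretype).

Definition OV (G : ctx) : seq V := map fst G.

Definition varsC (G : ctx) : seq V := OV G ++ flatten (map (fun p => varsT p.2) G).

Definition is_precontext (G : ctx) : Prop :=
  uniq (OV G) /\
  forall G1 x A G2, G = G1 ++ (x, A) :: G2 -> {subset varsT A <= OV G1}.

(* A set of type declarations (Gamma, S), each type symbol declared at most
   once, is represented as a partial map from type symbols to precontexts. *)
Definition tsig := Ty -> option ctx.

Inductive judgement : Type :=
| JCtx of ctx
| JTy of pretype & ctx
| JEl of preelem & pretype & ctx.

Inductive derivable (Sg : tsig) : judgement -> Prop :=
| R1 : derivable Sg (JCtx [::])
| R2 G x A :
    derivable Sg (JCtx G) -> derivable Sg (JTy A G) -> x \notin varsC G ->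
    derivable Sg (JCtx (rcons G (x, A)))
| R3 G1 x A G2 :
    derivable Sg (JCtx (G1 ++ (x, A) :: G2)) ->
    derivable Sg (JEl (PVar x) A (G1 ++ (x, A) :: G2))
| R4 S G D (as_ : seq preelem) :
    Sg S = Some G ->
    (* as_ : D -> G *)
    derivable Sg (JCtx D) -> derivable Sg (JCtx G) ->
    size as_ = size G ->
    (forall k x A a, onth G k = Some (x, A) -> onth as_ k = Some a ->
       derivable Sg (JEl a (substT (take k (OV G)) (take k as_) A) D)) ->
    derivable Sg (JTy (PreType S as_) D).

Definition is_signature (Sg : tsig) : Prop :=
  forall S G, Sg S = Some G -> is_precontext G /\ derivable Sg (JCtx G).

End Calculus.

Arguments PVar {V Fn}.

Definition infinite_type (V : eqType) : Prop := forall s : seq V, exists x, x \notin s.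

(* A finite category: objects and morphisms are finite types; comp g f is
   the composite g o f (only meaningful when cod f = dom g). *)
Record FoldsVocab : Type := {
  Ob : finType;
  Mor : finType;
  dom : Mor -> Ob;
  cod : Mor -> Ob;
  idm : Ob -> Mor;
  comp : Mor -> Mor -> Mor;
  dom_idm : forall A, dom (idm A) = A;
  cod_idm : forall A, cod (idm A) = A;
  dom_comp : forall f g, cod f = dom g -> dom (comp g f) = dom f;
  cod_comp : forall f g, cod f = dom g -> cod (comp g f) = cod g;
  comp_idl : forall f, comp (idm (cod f)) f = f;
  comp_idr : forall f, comp f (idm (dom f)) = f;
  comp_assoc : forall f g h, cod f = dom g -> cod g = dom h ->
     comp h (comp g f) = comp (comp h g) f;
  skeletal : forall f g, cod f = dom g -> cod g = dom f ->
     comp g f = idm (dom f) -> comp f g = idm (dom g) -> dom f = cod f;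
  no_endo : forall f, dom f = cod f -> f = idm (dom f)
}.

Definition leK (K : FoldsVocab) (A B : Ob K) : Prop :=
  exists f : Mor K, dom f = B /\ cod f = A.

Record FoldsChoice (K : FoldsVocab) : Type := {
  lin : rel (Ob K);
  lin_refl : reflexive lin;
  lin_trans : transitive lin;
  lin_anti : antisymmetric lin;
  lin_total : total lin;
  lin_ext : forall A B, leK A B -> lin A B;
  enumK : Ob K -> seq (Mor K);
  enumK_uniq : forall A, uniq (enumK A);
  enumK_mem : forall A f, f \in enumK A <-> (dom f = A /\ f <> idm A);
  enumK_sorted : forall A, pairwise (fun f g => lin (cod f) (cod g)) (enumK A)
}.

(* Gamma_A = x_1 : A_1, ..., x_n : A_n with x_i = x^A_i, C_i = cod x_i and
   A_i = C_i(OV(Gamma_{C_i})^{x_i}).  Since OV(Gamma_C) is by definition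
   the enumeration x^C_1,...,x^C_{n(C)}, this is the closed form of the
   inductive definition.  Morphisms are variables via the injection emb. *)
Definition OVK (K : FoldsVocab) (ch : FoldsChoice K) (C : Ob K) : seq (Mor K) :=
  enumK ch C.

Definition GammaK (V : eqType) (Fn : Type) (K : FoldsVocab) (ch : FoldsChoice K)
  (emb : Mor K -> V) (A : Ob K) : ctx V Fn (Ob K) :=
  [seq (emb x, PreType (cod x) [seq PVar (emb (comp u x)) | u <- OVK ch (cod x)])
  | x <- enumK ch A].

Definition SigmaK (V : eqType) (Fn : Type) (K : FoldsVocab) (ch : FoldsChoice K)
  (emb : Mor K -> V) : tsig V Fn (Ob K) :=
  fun A => Some (GammaK Fn ch emb A).

From Pilot Require Import Defs.
From mathcomp Require Import all_boot.
Set Implicit Arguments. Unset Strict Implicit. Unset Printing Implicit Defensive.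

(* Because K is skeletal without non-identity endomorphisms, a composite u x
   with x non-identity is again non-identity, and its codomain
   cod u lies strictly below cod x.  Hence in the codomain-sorted enumeration
   of the morphisms out of A, every variable ux occurring in the type of x
   comes before x: Gamma_A is a precontext.  That Gamma_A is derivable as a
   context then follows by well-founded induction along <=*: each entry
   x : C(OV(Gamma_C)^x) is formed by R4 from the derivability of Gamma_C,
   C = cod x < A, whose substitution instances are exactly the types of the
   earlier variables ux, available by R3. *)

Section FoldsCategory.
Variable K : FoldsVocab.
Local Notation comp := Defs.comp.

Lemma cod_nonidm (f : Mor K) : f <> idm (dom f) -> cod f <> dom f.
Proof. by move=> nf cf; apply: nf; apply: no_endo; rewrite cf. Qed.

Lemma comp_nonidm (x u : Mor K) : cod x = dom u ->
  x <> idm (dom x) -> comp u x <> idm (dom x).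
Proof.
move=> cxu nx ux1.
have cud : cod u = dom x by rewrite -(cod_comp cxu) ux1 cod_idm.
have xu1 : comp x u = idm (dom u).
  by rewrite -(dom_comp cud); apply: no_endo; rewrite dom_comp // cod_comp.
by apply/nx/no_endo; rewrite (skeletal cxu cud ux1 xu1).
Qed.

Variable ch : FoldsChoice K.
Local Notation E := (enumK ch).

Lemma enumKP A f : f \in E A -> dom f = A /\ f <> idm A.
Proof. exact: (enumK_mem ch A f).1. Qed.

Lemma enumK_comp A x u : x \in E A -> u \in E (cod x) -> comp u x \in E A.
Proof.
move=> /enumKP [dx nx] /enumKP [du _]; apply/(enumK_mem ch).
rewrite dom_comp //; split=> //.
by rewrite -dx; apply: comp_nonidm; rewrite ?dx ?du.
Qed.

Lemma lin_cod_enumK A x : x \in E A -> lin ch (cod x) A && ~~ lin ch A (cod x).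
Proof.
move=> /enumKP [dx nx]; have lxA : lin ch (cod x) A by apply: lin_ext; exists x.
rewrite lxA /=; apply/negP => lAx; apply: (cod_nonidm (f := x)); rewrite dx //.
by apply: (@lin_anti _ ch); rewrite lxA lAx.
Qed.

Lemma card_lin_cod_lt A y : y \in E A ->
  #|[pred B | lin ch B (cod y)]| < #|[pred B | lin ch B A]|.
Proof.
move=> /lin_cod_enumK /andP [lyA nlAy].
apply/proper_card/properP; split.
  by apply/subsetP => B; rewrite !inE => /lin_trans; apply.
by exists A; rewrite !inE ?lin_refl.
Qed.

(* The sortedness of the enumeration is what forces u x to come before x. *)
Lemma enumK_comp_before A p1 x p2 u :
  E A = p1 ++ x :: p2 -> u \in E (cod x) -> comp u x \in p1.
Proof.
move=> eA uC; have xA : x \in E A by rewrite eA mem_cat mem_head orbT.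
have := enumK_comp xA uC; rewrite eA mem_cat in_cons.
have [du _] := enumKP uC.
have ccod : cod (comp u x) = cod u by rewrite cod_comp.
have /andP [_ /negP nlxu] := lin_cod_enumK uC.
case/or3P => // [/eqP e | inp2]; first by case: nlxu; rewrite -ccod e lin_refl.
have := enumK_sorted ch A; rewrite eA pairwise_cat pairwise_cons.
by case/and4P => _ _ /allP /(_ _ inp2) /=; rewrite ccod.
Qed.

End FoldsCategory.

Section SigmaK.
Variables (V : eqType) (Fn : Type) (K : FoldsVocab) (emb : Mor K -> V).
Hypothesis emb_inj : injective emb.
Variable ch : FoldsChoice K.
Local Notation E := (enumK ch).
Local Notation Sg := (SigmaK Fn ch emb).
Local Notation comp := Defs.comp.

Definition typeK (x : Mor K) : pretype V Fn (Ob K) :=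
  PreType (cod x) [seq PVar (emb (comp u x)) | u <- E (cod x)].

Definition entryK (x : Mor K) : V * pretype V Fn (Ob K) := (emb x, typeK x).

Lemma GammaK_map A : GammaK Fn ch emb A = map entryK (E A).
Proof. by []. Qed.

Lemma varsT_typeK x : varsT (typeK x) = [seq emb (comp u x) | u <- E (cod x)].
Proof. by rewrite /varsT /=; elim: (E (cod x)) => //= ? ? ->. Qed.

Lemma OV_map_entryK (p : seq (Mor K)) : OV (map entryK p) = map emb p.
Proof. by rewrite /OV -map_comp. Qed.

Lemma map_entryK_cat (p : seq (Mor K)) G1 a G2 : map entryK p = G1 ++ a :: G2 ->
  exists p1 x p2, [/\ p = p1 ++ x :: p2, G1 = map entryK p1 & a = entryK x].
Proof.
elim: G1 p => [|b G1 IH] [|y p] //= [].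
  by move=> <- _; exists [::], y, p.
by move=> eb /IH [p1 [x [p2 [-> -> ->]]]]; exists (y :: p1), x, p2; rewrite -eb.
Qed.

Definition prefix_closed (p : seq (Mor K)) := forall p1 x p2 u,
  p = p1 ++ x :: p2 -> u \in E (cod x) -> comp u x \in p1.

Lemma prefix_closed_enumK A : prefix_closed (E A).
Proof. by move=> p1 x p2 u; apply: enumK_comp_before. Qed.

Lemma prefix_closed_rcons q x : prefix_closed (rcons q x) ->
  prefix_closed q /\ forall u, u \in E (cod x) -> comp u x \in q.
Proof.
move=> cl; split=> [p1 y p2 u e|u]; first by apply: (cl p1 y (rcons p2 x)); rewrite e rcons_cat.
by apply: (cl q x [::]); rewrite cats1.
Qed.

Lemma varsC_map_entryK q : prefix_closed q -> {subset varsC (map entryK q) <= map emb q}.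
Proof.
move=> cl v; rewrite /varsC mem_cat OV_map_entryK => /orP [//|].
rewrite -map_comp => /flattenP [s /mapP [y yq ->]] /=.
rewrite varsT_typeK => /mapP [u uC ->]; case/splitPr: yq cl => q1 q2 cl.
by apply: map_f; rewrite mem_cat (cl q1 y q2 u erefl uC).
Qed.

Lemma precontext_GammaK A : is_precontext (GammaK Fn ch emb A).
Proof.
rewrite GammaK_map; split.
  by rewrite OV_map_entryK (map_inj_uniq emb_inj) enumK_uniq.
move=> G1 x B G2 /map_entryK_cat [p1 [y [p2 [eA -> [_ ->]]]]].
rewrite varsT_typeK OV_map_entryK => v /mapP [u uC ->].
exact/map_f/(enumK_comp_before eA uC).
Qed.

(* Substituting OV(Gamma_C)^x for OV(Gamma_C) in the type of the k-th
   variable w of Gamma_C yields the type of w x; the morphisms u w occurring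
   there precede w, so only the first k substituends matter. *)
Lemma substT_typeK x w k : onth (E (cod x)) k = Some w ->
  substT (take k (OV (GammaK Fn ch emb (cod x))))
         (take k [seq PVar (emb (comp u x)) | u <- E (cod x)]) (typeK w)
  = typeK (comp w x).
Proof.
move=> e.
have kl : k < size (E (cod x)) by rewrite -onthTE e.
have wn : nth w (E (cod x)) k = w by rewrite -odflt_onth e.
have eC : E (cod x) = take k (E (cod x)) ++ w :: drop k.+1 (E (cod x)).
  by rewrite -{1}(cat_take_drop k (E (cod x))) (drop_nth w kl) wn.
have wC : w \in E (cod x) by apply/onthP; exists k.
have [dw _] := enumKP wC.
rewrite GammaK_map OV_map_entryK -!map_take /substT /typeK /= cod_comp ?dw //.
congr PreType; rewrite -map_comp; apply/eq_in_map => v vC /=.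
have vk := enumK_comp_before eC vC; have [dv _] := enumKP vC.
rewrite mem_map // vk index_map // (nth_map v) ?index_mem //.
by rewrite nth_index // comp_assoc.
Qed.

Lemma derivable_typeK q x : derivable Sg (JCtx (map entryK q)) ->
  derivable Sg (JCtx (GammaK Fn ch emb (cod x))) ->
  (forall u, u \in E (cod x) -> comp u x \in q) ->
  derivable Sg (JTy (typeK x) (map entryK q)).
Proof.
move=> Dq DC cl; apply: (@R4 _ _ _ _ (cod x) (GammaK Fn ch emb (cod x))) => //.
  by rewrite GammaK_map !size_map.
move=> k y B a; rewrite GammaK_map onth_map.
case e: (onth (E (cod x)) k) => [w|] //= [_ <-]; rewrite onth_map e => -[<-].
rewrite -GammaK_map substT_typeK //.
have wC : w \in E (cod x) by apply/onthP; exists k.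
case/splitPr: (cl _ wC) Dq => q1 q2; rewrite map_cat /= => Dq.
exact: R3.
Qed.

Lemma derivable_map_entryK p : uniq p -> prefix_closed p ->
  (forall y, y \in p -> derivable Sg (JCtx (GammaK Fn ch emb (cod y)))) ->
  derivable Sg (JCtx (map entryK p)).
Proof.
elim/last_ind: p => [|q x IH] uqx clqx DC; first exact: R1.
rewrite rcons_uniq in uqx; case/andP: uqx => xq uq.
have [clq clx] := prefix_closed_rcons clqx.
have Dq : derivable Sg (JCtx (map entryK q)).
  by apply: IH => // y yq; apply: DC; rewrite mem_rcons in_cons yq orbT.
rewrite map_rcons; apply: R2 => //.
  by apply: derivable_typeK => //; apply: DC; rewrite mem_rcons mem_head.
by apply: contra xq => /(varsC_map_entryK clq); rewrite mem_map.
Qed.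

Lemma derivable_GammaK A : derivable Sg (JCtx (GammaK Fn ch emb A)).
Proof.
have [n] := ubnP #|[pred B | lin ch B A]|; elim: n A => // n IH A cA.
rewrite GammaK_map; apply: derivable_map_entryK.
- exact: enumK_uniq.
- exact: prefix_closed_enumK.
by move=> y yA; apply: IH; apply: leq_trans (card_lin_cod_lt yA) cA.
Qed.

End SigmaK.

Theorem mainTheorem8 :
  forall (V : eqType) (Fn : Type), infinite_type V ->
  forall (K : FoldsVocab) (emb : Mor K -> V), injective emb ->
  forall ch : FoldsChoice K,
    is_signature (SigmaK Fn ch emb).
Proof.
move=> V Fn _ K emb emb_inj ch S G [<-]; split.
  exact: precontext_GammaK.
exact: derivable_GammaK.
Qed.
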